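(* Let $d\ge1$, let $P$ be a complex polynomial of degree $d$ and $Z\subset D_1$. Then $$\sup_{D_1}|P|\le K_d(Z)\sup_Z|P|,\qquad K_d(Z)=\inf_{\alpha>0}\Big(\frac{6e^{1/\alpha}}{c_{d,\alpha}(Z)}\Big)^d$$ (with the convention that a term with $c_{d,\alpha}(Z)=0$ equals $+\infty$).
   Context: $D_r=\{z\in\mathbb C:|z|<r\}$. For $Z\subset D_1$, $d\in\mathbb N$ and $\alpha>0$, the $(d,\alpha)$-Cartan measure is $c_{d,\alpha}(Z)=\inf\{(\sum_{j=1}^q r_j^\alpha)^{1/\alpha}:\ Z\text{ is covered by } q\le d \text{ disks of radii } r_1,\dots,r_q>0\}$. *)

From Stdlib Require Import Reals List.
Open Scope R_scope.

Definition Cx : Type := (R * R)%type.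
Definition C0 : Cx := (0, 0).
Definition Cadd (z w : Cx) : Cx := (fst z + fst w, snd z + snd w).
Definition Csub (z w : Cx) : Cx := (fst z - fst w, snd z - snd w).
Definition Cmul (z w : Cx) : Cx :=
  (fst z * fst w - snd z * snd w, fst z * snd w + snd z * fst w).
Definition Cmod (z : Cx) : R := sqrt (fst z ^ 2 + snd z ^ 2).

(* Polynomial given by its coefficient list [a_0; a_1; ...; a_n] (lowest
   degree first); evaluation by Horner's scheme: a_0 + z (a_1 + z (...)). *)
Fixpoint peval (a : list Cx) (z : Cx) : Cx :=
  match a with
  | nil => C0
  | c :: l => Cadd c (Cmul z (peval l z))
  end.

Definition has_degree (a : list Cx) (d : nat) : Prop :=
  length a = S d /\ nth d a C0 <> C0.

Definition in_disk (c : Cx) (r : R) (z : Cx) : Prop := Cmod (Csub z c) < r.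

Definition cartan_value (d : nat) (alpha : R) (Z : Cx -> Prop) (v : R) : Prop :=
  exists disks : list (Cx * R),
    (length disks <= d)%nat /\
    Forall (fun p => 0 < snd p) disks /\
    (forall z, Z z -> exists p, In p disks /\ in_disk (fst p) (snd p) z) /\
    v = Rpower (fold_right (fun p s => Rpower (snd p) alpha + s) 0 disks) (1 / alpha).

Definition is_glb (E : R -> Prop) (m : R) : Prop :=
  (forall x, E x -> m <= x) /\ (forall b, (forall x, E x -> b <= x) -> b <= m).

Definition is_cartan_measure (d : nat) (alpha : R) (Z : Cx -> Prop) (c : R) : Prop :=
  is_glb (cartan_value d alpha Z) c.

(* Write |P(z)| = |lc| prod_j |z - z_j| over the roots z_j.  Fix h < c_{d,alpha}(Z),
   put eta = h/2 and call w heavy when some disk D(w, r) holds at least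
   d (r/eta)^alpha roots.  Cartan's lemma covers the heavy points by at most d disks
   with sum r_j^alpha <= h^alpha < c^alpha, so some w in Z is not heavy.  Peeling off
   the roots farthest from w one at a time, the farthest of k remaining roots lies at
   distance >= lambda_k = eta (k/d)^(1/alpha), while |z - z_j| <= 2 + |w - z_j|
   <= 3 |w - z_j| / lambda_k.  Hence |P(z)| <= |P(w)| prod_k 3/lambda_k
   = (6/h)^d (d^d/d!)^(1/alpha) |P(w)| <= (6 e^(1/alpha)/h)^d M, and h -> c. *)

From Stdlib Require Import Reals List Lra Lia Classical Arith.
From Coquelicot Require Complex.
From mathcomp Require ssreflect ssrfun ssrbool eqtype ssrnat seq bigop ssralg ssrnum poly.
From mathcomp Require complex Rstruct.
Open Scope R_scope.

Section CountIn.
Context {T : Type}.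

Definition count_in (P : T -> bool) (S : list T) : nat := length (filter P S).

Lemma count_in_le_length P S : (count_in P S <= length S)%nat.
Proof. apply filter_length_le. Qed.

Lemma count_in_mono (P Q : T -> bool) S :
  (forall z, In z S -> P z = true -> Q z = true) -> (count_in P S <= count_in Q S)%nat.
Proof.
  unfold count_in; induction S as [|x S IH]; simpl; intros HPQ; [lia|].
  assert (IH' : (length (filter P S) <= length (filter Q S))%nat) by (apply IH; auto).
  destruct (P x) eqn:Px.
  - rewrite (HPQ x (or_introl eq_refl) Px); simpl; lia.
  - destruct (Q x); simpl; lia.
Qed.

Lemma count_in_filter (P Q : T -> bool) S :
  (forall z, In z S -> P z = true -> Q z = true) -> count_in P (filter Q S) = count_in P S.
Proof.
  unfold count_in; induction S as [|x S IH]; simpl; intros HPQ; [reflexivity|].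
  destruct (P x) eqn:Px.
  - rewrite (HPQ x (or_introl eq_refl) Px); simpl; rewrite Px; simpl; f_equal; auto.
  - destruct (Q x); simpl; [rewrite Px|]; auto.
Qed.

Lemma count_in_all P S : (forall z, In z S -> P z = true) -> count_in P S = length S.
Proof.
  unfold count_in; induction S as [|x S IH]; simpl; intros HP; [reflexivity|].
  rewrite (HP x (or_introl eq_refl)); simpl; f_equal; auto.
Qed.

Lemma count_in_app_cons P l1 x l2 : (count_in P (l1 ++ l2) <= count_in P (l1 ++ x :: l2))%nat.
Proof.
  unfold count_in; rewrite !filter_app, !length_app; simpl; destruct (P x); simpl; lia.
Qed.

End CountIn.

Lemma exists_argmax {A : Type} (f : A -> R) (l : list A) :
  l <> nil -> exists x, In x l /\ forall y, In y l -> f y <= f x.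
Proof.
  induction l as [|a l IH]; intros Hl; [congruence|].
  destruct l as [|b l'].
  - exists a; split; [now left|]; intros y [<-|[]]; lra.
  - destruct (IH ltac:(discriminate)) as [x [Hx Hmax]].
    destruct (Rle_dec (f a) (f x)).
    + exists x; split; [now right|]; intros y [<-|Hy]; auto.
    + exists a; split; [now left|]; intros y [<-|Hy]; [lra|].
      specialize (Hmax y Hy); lra.
Qed.

Lemma exists_largest_le (Q : nat -> Prop) m :
  Q 1%nat -> (1 <= m)%nat -> exists p, (1 <= p <= m)%nat /\ Q p /\ forall q, (p < q <= m)%nat -> ~ Q q.
Proof.
  intros Q1; induction m as [|m IH]; intros Hm; [lia|].
  destruct (classic (Q (S m))) as [HQ|HQ].
  - exists (S m); repeat split; auto; lia.
  - destruct m as [|m]; [contradiction|].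
    destruct (IH ltac:(lia)) as [p [Hp [Qp Hmax]]].
    exists p; repeat split; auto; try lia.
    intros q Hq; destruct (Nat.eq_dec q (S (S m))) as [->|]; auto; apply Hmax; lia.
Qed.

Lemma Rpower_gt0 x y : 0 < Rpower x y.
Proof. apply exp_pos. Qed.

Lemma Rpower_le_iff x y a : 0 < x -> 0 < y -> 0 < a -> Rpower x a <= Rpower y a <-> x <= y.
Proof.
  intros Hx Hy Ha; split; intros Hle.
  - destruct (Rle_dec x y) as [|Hxy]; auto.
    assert (Rpower y a < Rpower x a) by (apply Rlt_Rpower_l; lra); lra.
  - apply Rle_Rpower_l; lra.
Qed.

Lemma Rpower_Rpower_inv x a : 0 < x -> 0 < a -> Rpower (Rpower x (1 / a)) a = x.
Proof.
  intros Hx Ha; rewrite Rpower_mult; replace (1 / a * a) with 1 by (field; lra).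
  now apply Rpower_1.
Qed.

Lemma Rpower_inv_Rpower x a : 0 < x -> 0 < a -> Rpower (Rpower x a) (1 / a) = x.
Proof.
  intros Hx Ha; rewrite Rpower_mult; replace (a * (1 / a)) with 1 by (field; lra).
  now apply Rpower_1.
Qed.

Lemma exp_le_exp x y : x <= y <-> exp x <= exp y.
Proof.
  split; intros Hle.
  - destruct Hle as [Hlt|<-]; [left; now apply exp_increasing|lra].
  - apply Rnot_lt_le; intros Hlt; apply exp_increasing in Hlt; lra.
Qed.

Lemma exp_pow x n : exp x ^ n = exp (INR n * x).
Proof.
  induction n as [|n IH]; [simpl; now rewrite Rmult_0_l, exp_0|].
  rewrite S_INR; simpl; rewrite IH, <- exp_plus; f_equal; ring.
Qed.

(* Inductive step: [(1 + 1/n)^n <= e]. *)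
Lemma pow_le_fact_exp n : INR n ^ n <= INR (fact n) * exp (INR n).
Proof.
  induction n as [|n IH]; [simpl; rewrite exp_0; lra|].
  destruct (Nat.eq_dec n 0) as [->|Hn].
  - simpl; pose proof (exp_ineq1_le 1); lra.
  - assert (Hnpos : 0 < INR n) by (apply lt_0_INR; lia).
    assert (Hstep : INR (S n) ^ n <= INR n ^ n * exp 1).
    { replace (exp 1) with (exp (1 / INR n) ^ n) by (rewrite exp_pow; f_equal; field; lra).
      rewrite <- Rpow_mult_distr; apply pow_incr; split; [apply pos_INR|].
      rewrite S_INR; pose proof (exp_ineq1_le (1 / INR n)) as He.
      apply Rmult_le_compat_l with (r := INR n) in He; [|lra].
      replace (INR n * (1 + 1 / INR n)) with (INR n + 1) in He by (field; lra); lra. }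
    replace (INR (S n) ^ S n) with (INR (S n) * INR (S n) ^ n) by (simpl; ring).
    replace (INR (fact (S n)) * exp (INR (S n)))
      with (INR (S n) * (INR (fact n) * exp (INR n) * exp 1))
      by (rewrite fact_simpl, mult_INR, S_INR, exp_plus; ring).
    apply Rmult_le_compat_l; [apply pos_INR|].
    apply Rle_trans with (INR n ^ n * exp 1); [exact Hstep|].
    apply Rmult_le_compat_r; [left; apply exp_pos|exact IH].
Qed.

Lemma le_pow_mul_of_gt (X u M : R) (d : nat) : (1 <= d)%nat -> 0 <= u -> 0 <= M ->
  (forall v, u < v -> X <= v ^ d * M) -> X <= u ^ d * M.
Proof.
  intros Hd Hu HM Hv; apply Rnot_lt_le; intros HX.
  assert (Hud : 0 <= u ^ d) by (apply pow_le; lra).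
  destruct HM as [HM|<-].
  2:{ specialize (Hv (u + 1) ltac:(lra)); lra. }
  assert (HXM : u ^ d < X / M).
  { apply Rmult_lt_reg_r with M; [lra|]; replace (X / M * M) with X by (field; lra); lra. }
  set (y := (u ^ d + X / M) / 2).
  assert (Hdpos : 0 < INR d) by (apply lt_0_INR; lia).
  set (v := Rpower y (/ INR d)).
  assert (Hvy : v ^ d = y).
  { unfold v; rewrite <- Rpower_pow by apply Rpower_gt0.
    rewrite Rpower_mult, Rinv_l, Rpower_1 by (unfold y; lra); reflexivity. }
  assert (Huv : u < v).
  { apply Rnot_le_lt; intros Hvu.
    assert (v ^ d <= u ^ d) by (apply pow_incr; split; [left; apply Rpower_gt0|exact Hvu]).
    unfold y in Hvy; lra. }
  specialize (Hv v Huv); rewrite Hvy in Hv.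
  assert (y * M < X / M * M) by (apply Rmult_lt_compat_r; unfold y; lra).
  replace (X / M * M) with X in * by (field; lra); lra.
Qed.

Section CartanLemma.

Variables (alpha eta : R) (n : nat).
Hypotheses (alpha_gt0 : 0 < alpha) (eta_gt0 : 0 < eta) (n_ge1 : (1 <= n)%nat).

Definition cartan_radius (p : nat) : R := eta * Rpower (INR p / INR n) (1 / alpha).

Let n_gt0 : 0 < INR n.
Proof. apply lt_0_INR; lia. Qed.

Let Rpower_eta_gt0 : 0 < Rpower eta alpha.
Proof. apply Rpower_gt0. Qed.

Lemma cartan_radius_gt0 p : 0 < cartan_radius p.
Proof. apply Rmult_lt_0_compat; [exact eta_gt0|apply Rpower_gt0]. Qed.

Lemma Rpower_cartan_radius p : (1 <= p)%nat ->
  Rpower (cartan_radius p) alpha = INR p / INR n * Rpower eta alpha.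
Proof.
  intros Hp; assert (0 < INR p) by (apply lt_0_INR; lia).
  unfold cartan_radius; rewrite <- Rpower_mult_distr by (auto; apply Rpower_gt0).
  rewrite Rpower_Rpower_inv by (auto; apply Rdiv_lt_0_compat; auto); ring.
Qed.

Lemma le_cartan_radius r p : 0 < r -> (1 <= p)%nat ->
  r <= cartan_radius p <-> INR n * Rpower r alpha <= INR p * Rpower eta alpha.
Proof.
  intros Hr Hp; rewrite <- (Rpower_le_iff r (cartan_radius p) alpha) by (auto; apply cartan_radius_gt0).
  rewrite Rpower_cartan_radius by exact Hp.
  replace (INR p * Rpower eta alpha) with (INR n * (INR p / INR n * Rpower eta alpha)) by (field; lra).
  split; intros; [apply Rmult_le_compat_l|apply Rmult_le_reg_l with (INR n)]; lra.
Qed.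

Lemma Rpower_double_cartan_radius p : (1 <= p)%nat ->
  Rpower (2 * cartan_radius p) alpha = INR p * (Rpower (2 * eta) alpha / INR n).
Proof.
  intros Hp; rewrite <- !Rpower_mult_distr by (auto; lra || apply cartan_radius_gt0).
  rewrite Rpower_cartan_radius by exact Hp; field; lra.
Qed.

Lemma cartan_radius_le p : (1 <= p)%nat -> (p <= n)%nat -> cartan_radius p <= eta.
Proof.
  intros Hp Hpn; assert (0 < INR p) by (apply lt_0_INR; lia).
  rewrite <- (Rpower_le_iff _ _ alpha) by (auto; apply cartan_radius_gt0).
  rewrite Rpower_cartan_radius by exact Hp.
  assert (INR p <= INR n) by (apply le_INR; exact Hpn).
  rewrite <- (Rmult_1_l (Rpower eta alpha)) at 2; apply Rmult_le_compat_r; [lra|].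
  apply Rmult_le_reg_r with (INR n); [exact n_gt0|]; unfold Rdiv; rewrite Rmult_assoc, Rinv_l; lra.
Qed.

Fixpoint cartan_prod (k : nat) : R :=
  match k with
  | O => 1
  | S k' => cartan_prod k' * (cartan_radius k / 3)
  end.

Lemma cartan_prod_ge0 k : 0 <= cartan_prod k.
Proof.
  induction k as [|k IH]; simpl; [lra|].
  pose proof (cartan_radius_gt0 (S k)); apply Rmult_le_pos; lra.
Qed.

Lemma cartan_prod_eq k :
  cartan_prod k = (eta / 3) ^ k * Rpower (INR (fact k) / INR n ^ k) (1 / alpha).
Proof.
  induction k as [|k IH].
  - simpl; replace (1 / 1) with 1 by field; unfold Rpower; rewrite ln_1, Rmult_0_r, exp_0; ring.
  - simpl cartan_prod; rewrite IH; unfold cartan_radius.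
    assert (0 < INR (fact k) / INR n ^ k) by (apply Rdiv_lt_0_compat; [apply INR_fact_lt_0|apply pow_lt; auto]).
    assert (0 < INR (S k) / INR n) by (apply Rdiv_lt_0_compat; auto; apply lt_0_INR; lia).
    transitivity ((eta / 3) ^ S k * (Rpower (INR (fact k) / INR n ^ k) (1 / alpha)
                                   * Rpower (INR (S k) / INR n) (1 / alpha))); [simpl pow; field|].
    rewrite Rpower_mult_distr by auto; f_equal; f_equal.
    rewrite fact_simpl, mult_INR; simpl pow; field.
    split; [apply pow_nonzero|]; lra.
Qed.

Lemma cartan_prod_antimono m k : eta <= 1 -> (m <= k <= n)%nat -> cartan_prod k <= cartan_prod m.
Proof.
  intros Heta; induction k as [|k IH]; intros Hk.
  - replace m with 0%nat by lia; lra.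
  - destruct (Nat.eq_dec m (S k)) as [->|Hne]; [lra|]; simpl cartan_prod.
    pose proof (cartan_prod_ge0 k); pose proof (cartan_radius_gt0 (S k)).
    pose proof (cartan_radius_le (S k) ltac:(lia) ltac:(lia)).
    specialize (IH ltac:(lia)); nra.
Qed.

Lemma cartan_prod_n_ge : (eta / 3 * exp (- (1 / alpha))) ^ n <= cartan_prod n.
Proof.
  rewrite cartan_prod_eq, Rpow_mult_distr.
  apply Rmult_le_compat_l; [apply pow_le; lra|].
  assert (Hnn : 0 < INR n ^ n) by (apply pow_lt; auto).
  assert (Hfact : exp (- INR n) <= INR (fact n) / INR n ^ n).
  { rewrite exp_Ropp; apply Rmult_le_reg_r with (INR n ^ n * exp (INR n)).
    - apply Rmult_lt_0_compat; [exact Hnn|apply exp_pos].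
    - replace (/ exp (INR n) * (INR n ^ n * exp (INR n))) with (INR n ^ n)
        by (field; apply Rgt_not_eq, exp_pos).
      replace (INR (fact n) / INR n ^ n * (INR n ^ n * exp (INR n))) with (INR (fact n) * exp (INR n))
        by (field; lra).
      apply pow_le_fact_exp. }
  assert (Hln : - INR n <= ln (INR (fact n) / INR n ^ n)).
  { apply (proj2 (exp_le_exp _ _)); rewrite exp_ln; [exact Hfact|].
    apply Rdiv_lt_0_compat; [apply INR_fact_lt_0|exact Hnn]. }
  rewrite exp_pow; unfold Rpower; apply (proj1 (exp_le_exp _ _)).
  assert (0 < 1 / alpha) by (apply Rdiv_lt_0_compat; lra).
  replace (INR n * - (1 / alpha)) with (1 / alpha * - INR n) by ring.
  apply Rmult_le_compat_l; lra.
Qed.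

Lemma cartan_prod_ge m : eta <= 1 -> (m <= n)%nat ->
  (eta / 3 * exp (- (1 / alpha))) ^ n <= cartan_prod m.
Proof.
  intros Heta Hmn; apply Rle_trans with (1 := cartan_prod_n_ge).
  apply cartan_prod_antimono; [exact Heta|lia].
Qed.

Context {T : Type}.
Variable dist : T -> T -> R.
Hypotheses (dist_refl : forall x, dist x x = 0)
           (dist_sym : forall x y, dist x y = dist y x)
           (dist_tri : forall x y z, dist x z <= dist x y + dist y z).

Lemma dist_ge0 x y : 0 <= dist x y.
Proof. pose proof (dist_tri x y x) as Htri; rewrite dist_refl, (dist_sym y x) in Htri; lra. Qed.

Definition ballb (w : T) (r : R) (z : T) : bool := if Rlt_dec (dist w z) r then true else false.
Definition cballb (w : T) (r : R) (z : T) : bool := if Rle_dec (dist w z) r then true else false.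

Lemma ballbP w r z : ballb w r z = true <-> dist w z < r.
Proof. unfold ballb; destruct (Rlt_dec (dist w z) r); split; intros; auto; easy. Qed.

Lemma cballbP w r z : cballb w r z = true <-> dist w z <= r.
Proof. unfold cballb; destruct (Rle_dec (dist w z) r); split; intros; auto; easy. Qed.

Definition heavy (S : list T) (w : T) : Prop :=
  exists r, 0 < r /\ INR n * Rpower r alpha <= INR (count_in (ballb w r) S) * Rpower eta alpha.

Definition cartan_sum (L : list (T * R)) : R :=
  fold_right (fun p s => Rpower (snd p) alpha + s) 0 L.

Lemma cartan_sum_ge0 L : 0 <= cartan_sum L.
Proof. induction L as [|p L IH]; simpl; [lra|]; pose proof (Rpower_gt0 (snd p) alpha); lra. Qed.

Lemma cartan_sum_gt0 L : L <> nil -> 0 < cartan_sum L.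
Proof.
  destruct L as [|p L]; [congruence|]; intros _; simpl.
  pose proof (cartan_sum_ge0 L); pose proof (Rpower_gt0 (snd p) alpha); lra.
Qed.

Lemma crowded_of_heavy S w r q : 0 < r ->
  INR n * Rpower r alpha <= INR q * Rpower eta alpha -> (q <= count_in (ballb w r) S)%nat ->
  (1 <= q)%nat /\ r <= cartan_radius q /\ (q <= count_in (cballb w (cartan_radius q)) S)%nat.
Proof.
  intros Hr Hheavy HqS.
  assert (Hq : (1 <= q)%nat).
  { destruct q as [|q]; [|lia].
    pose proof (Rpower_gt0 r alpha); simpl in Hheavy; nra. }
  assert (Hrq : r <= cartan_radius q) by (apply le_cartan_radius; auto).
  repeat split; auto.
  apply Nat.le_trans with (1 := HqS).
  apply count_in_mono; intros z _ Hz; apply ballbP in Hz; apply cballbP; lra.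
Qed.

Lemma exists_crowded_disk S : S <> nil ->
  exists p c, (1 <= p <= length S)%nat /\ (p <= count_in (cballb c (cartan_radius p)) S)%nat /\
    forall q c', (p < q <= length S)%nat -> (count_in (cballb c' (cartan_radius q)) S < q)%nat.
Proof.
  intros HS; destruct S as [|z0 S0] eqn:ES; [congruence|]; rewrite <- ES.
  set (crowded := fun p => exists c, (p <= count_in (cballb c (cartan_radius p)) S)%nat).
  assert (crowded1 : crowded 1%nat).
  { exists z0; rewrite ES; unfold count_in; simpl.
    replace (cballb z0 (cartan_radius 1) z0) with true; [simpl; lia|].
    symmetry; apply cballbP; rewrite dist_refl; left; apply cartan_radius_gt0. }
  destruct (exists_largest_le crowded (length S) crowded1) as [p [Hp [[c Hc] Hmax]]];
    [rewrite ES; simpl; lia|].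
  exists p, c; repeat split; auto; try lia.
  intros q c' Hq; destruct (Nat.lt_ge_cases (count_in (cballb c' (cartan_radius q)) S) q) as [|Hge];
    [assumption|].
  exfalso; apply (Hmax q Hq); exists c'; exact Hge.
Qed.

Lemma count_in_ball_outside S w r c l : r + l <= dist w c ->
  count_in (ballb w r) (filter (fun z => negb (cballb c l z)) S) = count_in (ballb w r) S.
Proof.
  intros Hfar; apply count_in_filter; intros z _ Hz; apply ballbP in Hz.
  apply Bool.negb_true_iff; destruct (cballb c l z) eqn:Ez; [|reflexivity].
  apply cballbP in Ez; pose proof (dist_tri w z c); rewrite (dist_sym z c) in *; lra.
Qed.

(* Removing the points of a crowded disk with [p] maximal keeps every heavy point
   outside [D(c, 2 lambda_p)] heavy: were its radius larger than [lambda_p], it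
   would centre a crowded disk with a larger [p]. *)
Lemma heavy_remove_crowded S c p : (1 <= p)%nat ->
  (forall q c', (p < q <= length S)%nat -> (count_in (cballb c' (cartan_radius q)) S < q)%nat) ->
  forall w, heavy S w -> 2 * cartan_radius p <= dist w c ->
  heavy (filter (fun z => negb (cballb c (cartan_radius p) z)) S) w.
Proof.
  intros Hp Hmax w [r [Hr Hheavy]] Hfar.
  destruct (Rle_dec r (cartan_radius p)) as [Hsmall|Hlarge].
  - exists r; split; [exact Hr|]; rewrite count_in_ball_outside; [exact Hheavy|lra].
  - exfalso; set (q := count_in (ballb w r) S) in *.
    destruct (crowded_of_heavy S w r q Hr Hheavy (le_n q)) as [Hq1 [Hrq Hcrowd]].
    assert (Hpq : (p < q)%nat).
    { apply INR_lt, Rmult_lt_reg_r with (Rpower eta alpha); [exact Rpower_eta_gt0|].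
      apply Rlt_le_trans with (INR n * Rpower r alpha); [|exact Hheavy].
      apply Rnot_le_lt; rewrite <- le_cartan_radius by (auto; lia); exact Hlarge. }
    assert (Hqm : (q <= length S)%nat) by apply count_in_le_length.
    specialize (Hmax q w ltac:(lia)); lia.
Qed.

(* Cartan's lemma, proved greedily: cover the largest crowded disk by its double
   and recurse on the remaining points. *)
Lemma cartan_cover S : (length S <= n)%nat ->
  exists L : list (T * R),
    (length L <= length S)%nat /\ Forall (fun p => 0 < snd p) L /\
    cartan_sum L <= INR (length S) * (Rpower (2 * eta) alpha / INR n) /\
    forall w, heavy S w -> exists p, In p L /\ dist w (fst p) < snd p.
Proof.
  remember (length S) as m eqn:Hm; revert S Hm.
  induction m as [m IH] using lt_wf_ind; intros S Hm Hmn.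
  destruct S as [|z0 S0].
  - exists nil; simpl in Hm; subst m; repeat split; [simpl; lia|constructor|simpl; lra|].
    intros w [r [Hr Hheavy]]; pose proof (Rpower_gt0 r alpha); simpl in Hheavy; nra.
  - set (S := z0 :: S0) in *.
    destruct (exists_crowded_disk S ltac:(discriminate)) as [p [c [Hp [Hc Hmax]]]].
    set (lp := cartan_radius p) in *.
    assert (Hlp : 0 < lp) by apply cartan_radius_gt0.
    set (k := count_in (cballb c lp) S) in *.
    set (S' := filter (fun z => negb (cballb c lp z)) S).
    assert (Hk : (k <= m)%nat) by (rewrite Hm; apply count_in_le_length).
    assert (HS' : length S' = (m - k)%nat).
    { pose proof (filter_length (cballb c lp) S); unfold S', k, count_in in *; lia. }
    destruct (IH (m - k)%nat ltac:(lia) S' (eq_sym HS') ltac:(lia))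
      as [L' [HL'len [HL'pos [HL'sum HL'cov]]]].
    exists ((c, 2 * lp) :: L'); repeat split.
    + simpl; lia.
    + constructor; [simpl; lra|exact HL'pos].
    + simpl; unfold lp; rewrite Rpower_double_cartan_radius by lia.
      rewrite minus_INR in HL'sum by lia.
      assert (INR p <= INR k) by (apply le_INR; lia).
      assert (0 < Rpower (2 * eta) alpha / INR n)
        by (apply Rdiv_lt_0_compat; [apply Rpower_gt0|exact n_gt0]).
      nra.
    + intros w Hheavy.
      destruct (Rlt_dec (dist w c) (2 * lp)) as [Hnear|Hfar]; [exists (c, 2 * lp); simpl; auto|].
      destruct (HL'cov w) as [q [Hq Hwq]]; [|exists q; simpl; auto].
      apply heavy_remove_crowded with (p := p); auto; [lia|fold lp; lra].
Qed.

Definition dist_prod (u : T) (S : list T) : R := fold_right (fun z acc => dist u z * acc) 1 S.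

Lemma dist_prod_ge0 u S : 0 <= dist_prod u S.
Proof. induction S as [|z S IH]; simpl; [lra|]; apply Rmult_le_pos; [apply dist_ge0|exact IH]. Qed.

Lemma dist_prod_app_cons u l1 x l2 :
  dist_prod u (l1 ++ x :: l2) = dist u x * dist_prod u (l1 ++ l2).
Proof. induction l1 as [|y l1 IH]; simpl; [reflexivity|]; rewrite IH; ring. Qed.

Lemma heavy_app_cons l1 x l2 w : heavy (l1 ++ l2) w -> heavy (l1 ++ x :: l2) w.
Proof.
  intros [r [Hr Hheavy]]; exists r; split; [exact Hr|].
  apply Rle_trans with (1 := Hheavy); apply Rmult_le_compat_r; [left; exact Rpower_eta_gt0|].
  apply le_INR, count_in_app_cons.
Qed.

Lemma farthest_not_heavy S w x : (1 <= length S)%nat -> ~ heavy S w ->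
  (forall y, In y S -> dist w y <= dist w x) -> cartan_radius (length S) <= dist w x.
Proof.
  intros HS Hlight Hfarthest; apply Rnot_lt_le; intros Hnear; apply Hlight.
  exists (cartan_radius (length S)); split; [apply cartan_radius_gt0|].
  rewrite count_in_all by (intros y Hy; apply ballbP; specialize (Hfarthest y Hy); lra).
  rewrite Rpower_cartan_radius by exact HS; right; field; lra.
Qed.

(* Peel off the root farthest from [w]: it lies at distance [>= lambda_m]
   from [w], and [dist z x <= 2 + dist w x <= 3 dist w x / lambda_m]. *)
Lemma dist_prod_not_heavy z w pts : eta <= 1 -> dist z w <= 2 -> (length pts <= n)%nat ->
  ~ heavy pts w -> dist_prod z pts * cartan_prod (length pts) <= dist_prod w pts.
Proof.
  intros Heta Hzw; remember (length pts) as m eqn:Hm; revert pts Hm.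
  induction m as [|m IH]; intros pts Hm Hmn Hlight.
  - destruct pts; [simpl; lra|discriminate].
  - assert (Hpts : pts <> nil) by (intros ->; discriminate).
    destruct (exists_argmax (dist w) pts Hpts) as [x [Hx Hfarthest]].
    assert (Hfar : cartan_radius (S m) <= dist w x)
      by (rewrite Hm; apply farthest_not_heavy; auto; lia).
    destruct (in_split x pts Hx) as [l1 [l2 ->]].
    rewrite length_app in Hm; simpl in Hm.
    specialize (IH (l1 ++ l2) ltac:(rewrite length_app; lia) ltac:(lia)
                   (fun Hh => Hlight (heavy_app_cons l1 x l2 w Hh))).
    set (lm := cartan_radius (S m)) in *.
    assert (Hlm : 0 < lm <= 1)
      by (split; [apply cartan_radius_gt0|apply Rle_trans with eta; [apply cartan_radius_le|]; auto; lia]).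
    assert (Hfactor : dist z x * (lm / 3) <= dist w x).
    { pose proof (dist_tri z w x); pose proof (dist_ge0 z x); nra. }
    rewrite !dist_prod_app_cons; simpl cartan_prod; fold lm.
    pose proof (dist_prod_ge0 z (l1 ++ l2)); pose proof (cartan_prod_ge0 m).
    replace (dist z x * dist_prod z (l1 ++ l2) * (cartan_prod m * (lm / 3)))
      with (dist z x * (lm / 3) * (dist_prod z (l1 ++ l2) * cartan_prod m)) by ring.
    pose proof (dist_ge0 z x); apply Rmult_le_compat; auto; apply Rmult_le_pos; auto; lra.
Qed.

End CartanLemma.

Definition cdist (u z : Cx) : R := Cmod (Csub u z).

Lemma cdist_refl u : cdist u u = 0.
Proof. unfold cdist, Csub; rewrite !Rminus_diag; exact Complex.Cmod_0. Qed.

Lemma cdist_sym u z : cdist u z = cdist z u.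
Proof. unfold cdist, Cmod, Csub; simpl; f_equal; ring. Qed.

Lemma cdist_tri u v x : cdist u x <= cdist u v + cdist v x.
Proof.
  unfold cdist; replace (Csub u x) with (Cadd (Csub u v) (Csub v x))
    by (unfold Cadd, Csub; simpl; f_equal; ring).
  apply Complex.Cmod_triangle.
Qed.

Lemma cdist_C0 z : cdist z C0 = Cmod z.
Proof. unfold cdist, Csub, C0; simpl; rewrite !Rminus_0_r; now destruct z. Qed.

Definition Cprod (z : Cx) (rts : list Cx) : Cx :=
  fold_right (fun r acc => Cmul (Csub z r) acc) (1, 0) rts.

Lemma Cmod_Cprod z rts : Cmod (Cprod z rts) = dist_prod cdist z rts.
Proof.
  induction rts as [|r rts IH]; simpl; [exact Complex.Cmod_1|].
  rewrite <- IH; apply Complex.Cmod_mult.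
Qed.

Module FTA.
Import ssreflect ssrfun ssrbool eqtype ssrnat seq bigop ssralg ssrnum poly complex Rstruct.
Import GRing.Theory.
Local Open Scope ring_scope.

Definition toC (p : Cx) : R[i] := Complex (fst p) (snd p).
Definition ofC (c : R[i]) : Cx := (Re c, Im c).
Lemma ofCK c : toC (ofC c) = c. Proof. by case: c. Qed.
Lemma toCK p : ofC (toC p) = p. Proof. by case: p. Qed.
Lemma toC_add p q : toC (Cadd p q) = toC p + toC q. Proof. by case: p; case: q. Qed.
Lemma toC_mul p q : toC (Cmul p q) = toC p * toC q. Proof. by case: p; case: q. Qed.
Lemma toC_sub p q : toC (Csub p q) = toC p - toC q. Proof. by case: p; case: q. Qed.
Lemma toC_0 : toC C0 = 0. Proof. by []. Qed.

Lemma peval_horner a z : toC (peval a z) = (Poly (map toC a)).[toC z].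
Proof.
elim: a => [|c l IH] /=; first by rewrite horner0.
by rewrite horner_cons toC_add toC_mul IH addrC mulrC.
Qed.

Lemma Cprod_toC z rts : toC (Cprod z rts) = \prod_(r <- map toC rts) (toC z - r).
Proof.
elim: rts => [|r l IH] /=; first by rewrite big_nil.
by rewrite big_cons toC_mul IH toC_sub.
Qed.

Lemma size_length T (s : seq T) : size s = List.length s.
Proof. by elim: s => //= x l ->. Qed.

Lemma peval_factor (a : list Cx) : exists (lc : Cx) (rts : list Cx),
  (List.length rts <= Nat.pred (List.length a))%coq_nat /\ forall z, peval a z = Cmul lc (Cprod z rts).
Proof.
set p := Poly (map toC a).
have [p0|pn0] := eqVneq p 0.
  exists C0, nil; split; first by apply/leP.
  move=> z; rewrite -[peval a z]toCK peval_horner -/p p0 horner0.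
  by rewrite -[Cmul _ _]toCK toC_mul toC_0 mul0r.
have [r Hr] := closed_field_poly_normal p.
exists (ofC (lead_coef p)), (map ofC r); split.
  apply/leP.
  have : size p = (size r).+1.
    by rewrite {1}Hr size_scale ?lead_coef_eq0 // size_prod_XsubC.
  move=> Hs; have := size_Poly (map toC a); rewrite -/p Hs size_map.
  move=> H; rewrite -!size_length size_map; case: a H {p pn0 Hr Hs} => //=.
move=> z; apply: (can_inj toCK).
rewrite toC_mul Cprod_toC peval_horner -/p ofCK {1}Hr.
rewrite hornerZ horner_prod; congr (_ * _).
rewrite -map_comp.
have -> : map (toC \o ofC) r = r by rewrite (eq_map ofCK) map_id.
by apply: eq_bigr => x _; rewrite hornerXsubC.
Qed.
End FTA.

Lemma peval_modulus_factor a d : has_degree a d ->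
  exists K rts, 0 <= K /\ (length rts <= d)%nat /\
    forall z, Cmod (peval a z) = K * dist_prod cdist z rts.
Proof.
  intros [Hlen _]; destruct (FTA.peval_factor a) as [lc [rts [Hrts Hfactor]]].
  exists (Cmod lc), rts; repeat split.
  - apply Complex.Cmod_ge_0.
  - rewrite Hlen in Hrts; exact Hrts.
  - intros z; rewrite Hfactor, <- Cmod_Cprod; apply Complex.Cmod_mult.
Qed.

Lemma cartan_measure_le_1 d alpha Z c : (1 <= d)%nat -> (forall z, Z z -> Cmod z < 1) ->
  is_cartan_measure d alpha Z c -> c <= 1.
Proof.
  intros Hd HZ [Hlower _]; apply Hlower; exists ((C0, 1) :: nil); repeat split.
  - simpl; lia.
  - constructor; [simpl; lra|constructor].
  - intros z Hz; exists (C0, 1); split; [now left|].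
    unfold in_disk; simpl; fold (cdist z C0); rewrite cdist_C0; auto.
  - simpl; unfold Rpower; rewrite ln_1, !Rmult_0_r, exp_0, Rplus_0_r, ln_1, Rmult_0_r, exp_0.
    reflexivity.
Qed.

(* With [Z] empty the single disk [D(0, c/2)] would be an admissible covering. *)
Lemma cartan_measure_pos_inhabited d alpha Z c : (1 <= d)%nat -> 0 < alpha ->
  is_cartan_measure d alpha Z c -> 0 < c -> exists w, Z w.
Proof.
  intros Hd Ha [Hlower _] Hc; apply NNPP; intros Hempty.
  assert (c <= c / 2); [|lra].
  apply Hlower; exists ((C0, c / 2) :: nil); repeat split.
  - simpl; lia.
  - constructor; [simpl; lra|constructor].
  - intros z Hz; exfalso; apply Hempty; exists z; exact Hz.
  - simpl; rewrite Rplus_0_r, Rpower_inv_Rpower by lra; reflexivity.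
Qed.

(* Below the Cartan measure, the Cartan disks of the roots cannot cover [Z]. *)
Lemma exists_not_heavy d alpha Z c h rts : (1 <= d)%nat -> 0 < alpha ->
  is_cartan_measure d alpha Z c -> 0 < h < c -> (length rts <= d)%nat ->
  exists w, Z w /\ ~ heavy alpha (h / 2) d cdist rts w.
Proof.
  intros Hd Ha Hcart Hh Hrts.
  destruct (cartan_measure_pos_inhabited d alpha Z c Hd Ha Hcart ltac:(lra)) as [w0 Hw0].
  apply NNPP; intros Hall.
  assert (Hheavy : forall w, Z w -> heavy alpha (h / 2) d cdist rts w)
    by (intros w Hw; apply NNPP; intros Hlight; apply Hall; exists w; auto).
  destruct (cartan_cover alpha (h / 2) d Ha ltac:(lra) Hd cdist cdist_refl cdist_sym cdist_tri rts Hrts)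
    as [L [HLlen [HLpos [HLsum HLcov]]]].
  assert (Hsum_pos : 0 < cartan_sum alpha L).
  { apply cartan_sum_gt0; intros ->; destruct (HLcov w0 (Hheavy w0 Hw0)) as [p [[] _]]. }
  assert (Hsum : cartan_sum alpha L <= Rpower h alpha).
  { apply Rle_trans with (1 := HLsum); replace (2 * (h / 2)) with h by field.
    assert (INR (length rts) <= INR d) by (apply le_INR; exact Hrts).
    assert (0 < INR d) by (apply lt_0_INR; lia).
    pose proof (Rpower_gt0 h alpha).
    replace (Rpower h alpha) with (INR d * (Rpower h alpha / INR d)) at 2 by (field; lra).
    apply Rmult_le_compat_r; [apply Rlt_le, Rdiv_lt_0_compat|]; lra. }
  assert (Hcov : c <= Rpower (cartan_sum alpha L) (1 / alpha)).
  { destruct Hcart as [Hlower _]; apply Hlower; exists L; repeat split; auto; [lia|].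
    intros z Hz; exact (HLcov z (Hheavy z Hz)). }
  assert (Rpower (cartan_sum alpha L) (1 / alpha) <= h).
  { rewrite <- (Rpower_inv_Rpower h alpha) by lra.
    apply Rle_Rpower_l; [left; apply Rdiv_lt_0_compat; lra|lra]. }
  lra.
Qed.

Lemma dist_prod_bound d alpha Z c h rts z : (1 <= d)%nat -> 0 < alpha ->
  (forall w, Z w -> Cmod w < 1) -> is_cartan_measure d alpha Z c -> 0 < h < c ->
  (length rts <= d)%nat -> Cmod z < 1 ->
  exists w, Z w /\ dist_prod cdist z rts <= (6 * exp (1 / alpha) / h) ^ d * dist_prod cdist w rts.
Proof.
  intros Hd Ha HZ Hcart Hh Hrts Hz.
  destruct (exists_not_heavy d alpha Z c h rts Hd Ha Hcart Hh Hrts) as [w [Hw Hlight]].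
  exists w; split; [exact Hw|].
  pose proof (cartan_measure_le_1 d alpha Z c Hd HZ Hcart).
  assert (Hzw : cdist z w <= 2).
  { pose proof (cdist_tri z C0 w); rewrite (cdist_sym C0 w), !cdist_C0 in *.
    specialize (HZ w Hw); lra. }
  pose proof (dist_prod_not_heavy alpha (h / 2) d Ha ltac:(lra) Hd cdist cdist_refl cdist_sym cdist_tri
                z w rts ltac:(lra) Hzw Hrts Hlight) as Hprod.
  pose proof (cartan_prod_ge alpha (h / 2) d Ha ltac:(lra) Hd (length rts) ltac:(lra) Hrts) as Hlow.
  set (K := 6 * exp (1 / alpha) / h) in *.
  set (E := (h / 2 / 3 * exp (- (1 / alpha))) ^ d) in *.
  assert (HKE : K ^ d * E = 1).
  { unfold K, E; rewrite <- Rpow_mult_distr.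
    replace (6 * exp (1 / alpha) / h * (h / 2 / 3 * exp (- (1 / alpha))))
      with (exp (1 / alpha) * exp (- (1 / alpha))) by (field; lra).
    rewrite <- exp_plus, Rplus_opp_r, exp_0; apply pow1. }
  assert (HK : 0 <= K ^ d)
    by (apply pow_le; unfold K; pose proof (exp_pos (1 / alpha)); apply Rlt_le, Rdiv_lt_0_compat; lra).
  pose proof (dist_prod_ge0 cdist cdist_refl cdist_sym cdist_tri z rts).
  rewrite <- (Rmult_1_l (dist_prod cdist z rts)), <- HKE, Rmult_assoc.
  apply Rmult_le_compat_l; [exact HK|]; rewrite Rmult_comm.
  apply Rle_trans with (2 := Hprod); apply Rmult_le_compat_l; assumption.
Qed.

Lemma peval_bound_below_cartan d a Z alpha c M z h : (1 <= d)%nat -> has_degree a d ->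
  (forall w, Z w -> Cmod w < 1) -> 0 < alpha -> is_cartan_measure d alpha Z c ->
  (forall w, Z w -> Cmod (peval a w) <= M) -> Cmod z < 1 -> 0 < h < c ->
  Cmod (peval a z) <= (6 * exp (1 / alpha) / h) ^ d * M.
Proof.
  intros Hd Hdeg HZ Ha Hcart HM Hz Hh.
  destruct (peval_modulus_factor a d Hdeg) as [K [rts [HK [Hrts Hfactor]]]].
  destruct (dist_prod_bound d alpha Z c h rts z Hd Ha HZ Hcart Hh Hrts Hz) as [w [Hw Hbound]].
  set (B := (6 * exp (1 / alpha) / h) ^ d) in *.
  assert (HB : 0 <= B)
    by (unfold B; pose proof (exp_pos (1 / alpha)); apply pow_le, Rlt_le, Rdiv_lt_0_compat; lra).
  apply Rle_trans with (B * Cmod (peval a w)); [|apply Rmult_le_compat_l; auto].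
  rewrite !Hfactor, (Rmult_comm B), Rmult_assoc, (Rmult_comm _ B).
  apply Rmult_le_compat_l; assumption.
Qed.

Theorem mainTheorem7 :
  forall (d : nat) (a : list Cx) (Z : Cx -> Prop),
    (1 <= d)%nat ->
    has_degree a d ->
    (forall z, Z z -> Cmod z < 1) ->
    forall (alpha c : R), 0 < alpha ->
      is_cartan_measure d alpha Z c -> 0 < c ->
      forall M : R, (forall w, Z w -> Cmod (peval a w) <= M) ->
      forall z : Cx, Cmod z < 1 ->
        Cmod (peval a z) <= (6 * exp (1 / alpha) / c) ^ d * M.
Proof.
  intros d a Z Hd Hdeg HZ alpha c Ha Hcart Hc M HM z Hz.
  destruct (cartan_measure_pos_inhabited d alpha Z c Hd Ha Hcart Hc) as [w0 Hw0].
  set (K := 6 * exp (1 / alpha)).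
  assert (HK : 0 < K) by (unfold K; pose proof (exp_pos (1 / alpha)); lra).
  apply le_pow_mul_of_gt; [exact Hd|apply Rlt_le, Rdiv_lt_0_compat; lra| |].
  - apply Rle_trans with (2 := HM w0 Hw0); apply Complex.Cmod_ge_0.
  - intros v Hv.
    assert (Hv_pos : 0 < v) by (apply Rlt_trans with (2 := Hv), Rdiv_lt_0_compat; lra).
    replace v with (K / (K / v)) by (field; lra).
    apply (peval_bound_below_cartan d a Z alpha c M z); auto.
    split; [apply Rdiv_lt_0_compat; lra|].
    apply Rmult_lt_reg_r with (v / c); [apply Rdiv_lt_0_compat; lra|].
    replace (K / v * (v / c)) with (K / c) by (field; lra).
    replace (c * (v / c)) with v by (field; lra); exact Hv.
Qed.
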